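(* Let $n\ge 3$ be an odd integer, $(\mathcal{C},\Sigma)$ an $n$-angulated category and $(\mathcal{A},\Sigma)$ a complete and dense $n$-angulated subcategory. Then for every object $C$ of $\mathcal{C}$: $C$ lies in $\mathcal{A}$ if and only if $[C]=0$ in $K_0(\mathcal{C})/\operatorname{Im}K_0(\mathcal{A})$.
   Context: All categories are small. Fix an integer $n\ge 3$. Let $\mathcal{C}$ be an additive category with an automorphism $\Sigma$. An $n$-$\Sigma$-sequence in $\mathcal{C}$ is a diagram $A_1\xrightarrow{\alpha_1}A_2\xrightarrow{\alpha_2}\cdots\xrightarrow{\alpha_{n-1}}A_n\xrightarrow{\alpha_n}\Sigma A_1$. Its left rotation is $A_2\xrightarrow{\alpha_2}\cdots\xrightarrow{\alpha_n}\Sigma A_1\xrightarrow{(-1)^n\Sigma\alpha_1}\Sigma A_2$. A morphism from $(A_\bullet,\alpha)$ to $(B_\bullet,\beta)$ is a tuple $(\varphi_1,\dots,\varphi_n)$, $\varphi_i:A_i\to B_i$, with $\beta_i\varphi_i=\varphi_{i+1}\alpha_i$ for $1\le i\le n-1$ and $\beta_n\varphi_n=(\Sigma\varphi_1)\alpha_n$; it is an isomorphism if all $\varphi_i$ are isomorphisms. Direct sums of sequences are taken termwise. $(\mathcal{C},\Sigma)$ is $n$-angulated if it is equipped with a collection $\mathscr N$ of $n$-$\Sigma$-sequences, called $n$-angles, such that: (N1)(a) $\mathscr N$ is closed under direct sums, direct summands and isomorphisms of $n$-$\Sigma$-sequences; (b) for every object $A$, the trivial sequence $A\xrightarrow{1}A\to0\to\cdots\to0\to\Sigma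 A$ is in $\mathscr N$; (c) every morphism $A_1\to A_2$ is the first morphism of some $n$-angle; (N2) an $n$-$\Sigma$-sequence is in $\mathscr N$ iff its left rotation is; (N3) given $n$-angles $(A_\bullet,\alpha),(B_\bullet,\beta)$ and $\varphi_1:A_1\to B_1$, $\varphi_2:A_2\to B_2$ with $\beta_1\varphi_1=\varphi_2\alpha_1$, there exist $\varphi_3,\dots,\varphi_n$ making $(\varphi_1,\dots,\varphi_n)$ a morphism; (N4) in (N3) the $\varphi_i$ can be chosen so that the mapping cone $A_2\oplus B_1\to A_3\oplus B_2\to\cdots\to\Sigma A_1\oplus B_n\to\Sigma A_2\oplus\Sigma B_1$, with maps $\left[\begin{smallmatrix}-\alpha_{i+1}&0\\ \varphi_{i+1}&\beta_i\end{smallmatrix}\right]$ ($1\le i\le n-1$) and last map $\left[\begin{smallmatrix}-\Sigma\alpha_1&0\\ \Sigma\varphi_1&\beta_n\end{smallmatrix}\right]$, is an $n$-angle. Grothendieck group: $F(\mathcal{C})$ is the free abelian group on isomorphism classes $\langle A\rangle$ of objects; for an $n$-angle $A_\bullet$, $\chi(A_\bullet)=\sum_{i=1}^n(-1)^{i+1}\langle A_i\rangle$; $R(\mathcal{C})$ is generated by all $\chi(A_\bullet)$, together with $\langle 0\rangle$ when $n$ is even; $K_0(\mathcal{C})=F(\mathcal{C})/R(\mathcal{C})$, $[A]$ the class of $\langle A\rangle$. An additive functor $L:\mathcal{C}\to\mathcal{C}'$ between $n$-angulated categories is $n$-angulated if there is a natural isomorphism $\eta:L\circ\Sigma\to\Sigma'\circ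 L$ such that $L$ sends each $n$-angle $(A_\bullet,\alpha)$ to the $n$-angle $L A_1\xrightarrow{L\alpha_1}\cdots\xrightarrow{L\alpha_{n-1}}LA_n\xrightarrow{\eta\circ L\alpha_n}\Sigma'LA_1$. An $n$-angulated subcategory of $(\mathcal{C},\Sigma)$ is a full subcategory $\mathcal{A}$, closed under isomorphisms, on which $\Sigma$ restricts to an automorphism, equipped with $n$-angles making $(\mathcal{A},\Sigma)$ $n$-angulated, such that the inclusion $\mathcal{A}\to\mathcal{C}$ is $n$-angulated. $\mathcal{A}$ is dense if every object of $\mathcal{C}$ is a direct summand of an object of $\mathcal{A}$; complete if whenever an $n$-angle $A_1\to\cdots\to A_n\to\Sigma A_1$ in $\mathcal{C}$ has $n-1$ of $A_1,\dots,A_n$ in $\mathcal{A}$, the remaining one is in $\mathcal{A}$. $\operatorname{Im}K_0(\mathcal{A})$ is the image of the homomorphism $K_0(\mathcal{A})\to K_0(\mathcal{C})$, $[A]\mapsto[A]$, induced by the inclusion. *)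

From mathcomp Require Import all_boot all_algebra.
From mathcomp Require Import boolp.
From Stdlib Require Lists.List.
Set Implicit Arguments. Unset Strict Implicit. Unset Printing Implicit Defensive.
Import GRing.Theory.
Local Open Scope ring_scope.

(* A small category, presented in the two-sorted way (a type of objects, a
   type of morphisms with domain and codomain maps), equipped with the data of
   an additive structure on hom-sets and an endofunctor Sigma.
   [comp g f] is the composite  g o f  (defined when cod f = dom g). *)
Record ncat := NCat {
  Ob : Type; Mor : Type;
  dom : Mor -> Ob; cod : Mor -> Ob;
  idm : Ob -> Mor;
  comp : Mor -> Mor -> Mor;
  zerom : Ob -> Ob -> Mor;
  addm : Mor -> Mor -> Mor;
  oppm : Mor -> Mor;
  SigO : Ob -> Ob;
  SigM : Mor -> Mor }.

Arguments dom {_}. Arguments cod {_}. Arguments idm {_}. Arguments comp {_}.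
Arguments zerom {_}. Arguments addm {_}. Arguments oppm {_}.
Arguments SigO {_}. Arguments SigM {_}.

Section NAngulated.
Variable C : ncat.

Definition hom (f : Mor C) (A B : Ob C) : Prop := dom f = A /\ cod f = B.

Record preadditive : Prop := {
  pa_id : forall A, hom (idm A) A A;
  pa_comp : forall f g A B D, hom f A B -> hom g B D -> hom (comp g f) A D;
  pa_idl : forall f A B, hom f A B -> comp (idm B) f = f;
  pa_idr : forall f A B, hom f A B -> comp f (idm A) = f;
  pa_assoc : forall f g h A B D E, hom f A B -> hom g B D -> hom h D E ->
     comp h (comp g f) = comp (comp h g) f;
  pa_zero : forall A B, hom (zerom A B) A B;
  pa_add : forall f g A B, hom f A B -> hom g A B -> hom (addm f g) A B;
  pa_opp : forall f A B, hom f A B -> hom (oppm f) A B;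
  pa_addA : forall f g h A B, hom f A B -> hom g A B -> hom h A B ->
     addm f (addm g h) = addm (addm f g) h;
  pa_addC : forall f g A B, hom f A B -> hom g A B -> addm f g = addm g f;
  pa_add0 : forall f A B, hom f A B -> addm f (zerom A B) = f;
  pa_addN : forall f A B, hom f A B -> addm f (oppm f) = zerom A B;
  pa_compDl : forall f g h A B D, hom f A B -> hom g A B -> hom h B D ->
     comp h (addm f g) = addm (comp h f) (comp h g);
  pa_compDr : forall f g h A B D, hom f B D -> hom g B D -> hom h A B ->
     comp (addm f g) h = addm (comp f h) (comp g h) }.

Definition iso (f : Mor C) : Prop :=
  exists g, hom g (cod f) (dom f) /\ comp g f = idm (dom f) /\ comp f g = idm (cod f).

Definition isoob (X Y : Ob C) : Prop := exists f, hom f X Y /\ iso f.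

Definition is_zero (Z : Ob C) : Prop := idm Z = zerom Z Z.

Record bip := Bip { bo : Ob C; bi1 : Mor C; bi2 : Mor C; bp1 : Mor C; bp2 : Mor C }.

Definition is_biprod (X Y : Ob C) (d : bip) : Prop :=
  [/\ hom (bi1 d) X (bo d), hom (bi2 d) Y (bo d), hom (bp1 d) (bo d) X,
      hom (bp2 d) (bo d) Y &
  [/\ comp (bp1 d) (bi1 d) = idm X, comp (bp2 d) (bi2 d) = idm Y,
      comp (bp1 d) (bi2 d) = zerom Y X, comp (bp2 d) (bi1 d) = zerom X Y &
      addm (comp (bi1 d) (bp1 d)) (comp (bi2 d) (bp2 d)) = idm (bo d)]].

Definition additive_on (P : Ob C -> Prop) : Prop :=
  [/\ preadditive,
      exists Z, P Z /\ is_zero Z &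
      forall X Y, P X -> P Y -> exists d, P (bo d) /\ is_biprod X Y d].

Definition sig_auto (P : Ob C -> Prop) : Prop :=
  [/\ (forall f A B, hom f A B -> hom (SigM f) (SigO A) (SigO B)),
      (forall A : Ob C, SigM (idm A) = idm (SigO A)),
      (forall f g A B D, hom f A B -> hom g B D ->
          SigM (comp g f) = comp (SigM g) (SigM f)),
      (forall f g A B, hom f A B -> hom g A B ->
          SigM (addm f g) = addm (SigM f) (SigM g)) &
   [/\ (forall X, P X -> P (SigO X)),
       (forall X Y, P X -> P Y -> SigO X = SigO Y -> X = Y),
       (forall Y, P Y -> exists X, P X /\ SigO X = Y),
       (forall A B f g, P A -> P B -> hom f A B -> hom g A B -> SigM f = SigM g -> f = g) &
       (forall A B g, P A -> P B -> hom g (SigO A) (SigO B) ->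
          exists f, hom f A B /\ SigM f = g)]].

(* n-Sigma-sequences, indexed from 0: objects so 0 .. so (n-1) (= A_1 .. A_n),
   morphisms sm i : so i -> so (i+1) for i < n-1 (= alpha_(i+1)) and
   sm (n-1) : so (n-1) -> Sigma (so 0) (= alpha_n).  Values at other indices
   are irrelevant. *)
Record nsigseq := NSeq { so : nat -> Ob C; sm : nat -> Mor C }.

Variable n : nat.

Definition is_nseq (P : Ob C -> Prop) (s : nsigseq) : Prop :=
  [/\ forall i, (i < n)%N -> P (so s i),
      forall i, (i.+1 < n)%N -> hom (sm s i) (so s i) (so s i.+1) &
      hom (sm s n.-1) (so s n.-1) (SigO (so s 0))].

Definition sgn (f : Mor C) : Mor C := if odd n then oppm f else f.

Definition lrot (s : nsigseq) : nsigseq :=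
  NSeq (fun i => if (i.+1 < n)%N then so s i.+1 else SigO (so s 0))
       (fun i => if (i.+1 < n)%N then sm s i.+1 else sgn (SigM (sm s 0))).

Definition seqmor (s t : nsigseq) (phi : nat -> Mor C) : Prop :=
  [/\ forall i, (i < n)%N -> hom (phi i) (so s i) (so t i),
      forall i, (i.+1 < n)%N -> comp (sm t i) (phi i) = comp (phi i.+1) (sm s i) &
      comp (sm t n.-1) (phi n.-1) = comp (SigM (phi 0%N)) (sm s n.-1)].

Definition seqiso (s t : nsigseq) : Prop :=
  exists phi, seqmor s t phi /\ forall i, (i < n)%N -> iso (phi i).

Definition seqsum (s t u : nsigseq) : Prop :=
  exists e1 e2 q1 q2, [/\ seqmor s u e1, seqmor t u e2, seqmor u s q1, seqmor u t q2 &
    forall i, (i < n)%N ->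
      is_biprod (so s i) (so t i) (Bip (so u i) (e1 i) (e2 i) (q1 i) (q2 i))].

(* trivial sequence  A -1-> A -> Z -> ... -> Z -> Sigma A, Z a zero object *)
Definition triv (A Z : Ob C) : nsigseq :=
  let o := fun i => if (i < 2)%N then A else Z in
  NSeq o (fun i => if i == 0%N then idm A
                   else if (i.+1 < n)%N then zerom (o i) (o i.+1)
                   else zerom (o i) (SigO A)).

(* mapping cone, built from chosen biproducts D j of (lrot s)_j and t_j *)
Definition cone (s t : nsigseq) (phi : nat -> Mor C) (D : nat -> bip) : nsigseq :=
  NSeq (fun j => bo (D j))
   (fun j => if (j.+1 < n)%N then
       addm (addm (comp (bi1 (D j.+1)) (comp (oppm (sm s j.+1)) (bp1 (D j))))
                  (comp (bi2 (D j.+1)) (comp (phi j.+1) (bp1 (D j)))))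
            (comp (bi2 (D j.+1)) (comp (sm t j) (bp2 (D j))))
     else
       addm (addm (comp (SigM (bi1 (D 0%N))) (comp (oppm (SigM (sm s 0%N))) (bp1 (D j))))
                  (comp (SigM (bi2 (D 0%N))) (comp (SigM (phi 0%N)) (bp1 (D j)))))
            (comp (SigM (bi2 (D 0%N))) (comp (sm t j) (bp2 (D j))))).

Record nangulated (P : Ob C -> Prop) (N : nsigseq -> Prop) : Prop := {
  na_add : additive_on P;
  na_sig : sig_auto P;
  na_wf : forall s, N s -> is_nseq P s;
  na_iso : forall s t, N s -> is_nseq P t -> seqiso s t -> N t;
  na_sum : forall s t u, is_nseq P s -> is_nseq P t -> is_nseq P u ->
     seqsum s t u -> (N u <-> N s /\ N t);
  na_triv : forall A Z, P A -> P Z -> is_zero Z -> N (triv A Z);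
  na_ext : forall f, P (dom f) -> P (cod f) -> exists s, N s /\ sm s 0%N = f;
  na_rot : forall s, is_nseq P s -> (N s <-> N (lrot s));
  na_mor : forall s t f1 f2, N s -> N t ->
     hom f1 (so s 0%N) (so t 0%N) -> hom f2 (so s 1%N) (so t 1%N) ->
     comp (sm t 0%N) f1 = comp f2 (sm s 0%N) ->
     exists phi, [/\ seqmor s t phi, phi 0%N = f1 & phi 1%N = f2];
  na_cone : forall s t f1 f2, N s -> N t ->
     hom f1 (so s 0%N) (so t 0%N) -> hom f2 (so s 1%N) (so t 1%N) ->
     comp (sm t 0%N) f1 = comp f2 (sm s 0%N) ->
     exists phi, [/\ seqmor s t phi, phi 0%N = f1, phi 1%N = f2 &
       forall D : nat -> bip,
         (forall j, (j < n)%N -> P (bo (D j)) /\ is_biprod (so (lrot s) j) (so t j) (D j)) ->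
         N (cone s t phi D)] }.

Definition incl_nangulated (N : nsigseq -> Prop) (P : Ob C -> Prop) (NP : nsigseq -> Prop) : Prop :=
  exists eta : Ob C -> Mor C,
    [/\ forall X, P X -> hom (eta X) (SigO X) (SigO X) /\ iso (eta X),
        forall f, P (dom f) -> P (cod f) ->
          comp (eta (cod f)) (SigM f) = comp (SigM f) (eta (dom f)) &
        forall s, NP s ->
          N (NSeq (so s) (fun i => if i == n.-1 then comp (eta (so s 0%N)) (sm s n.-1)
                                   else sm s i))].

(* n-angulated subcategory of (C, Sigma, N): full, closed under isomorphisms,
   Sigma restricts to an automorphism (contained in [nangulated]), with its own
   n-angles NP, and the inclusion is n-angulated. *)
Definition nang_subcat (N : nsigseq -> Prop) (P : Ob C -> Prop) (NP : nsigseq -> Prop) : Prop :=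
  [/\ forall X Y, P X -> isoob X Y -> P Y,
      nangulated P NP &
      incl_nangulated N P NP].

Definition dense (P : Ob C -> Prop) : Prop :=
  forall X, exists Z d, is_biprod X Z d /\ P (bo d).

Definition complete (N : nsigseq -> Prop) (P : Ob C -> Prop) : Prop :=
  forall s, N s -> forall k, (k < n)%N ->
    (forall i, (i < n)%N -> i != k -> P (so s i)) -> P (so s k).

(* ---- Grothendieck group ----
   An element of F(C) (free abelian group on isomorphism classes) is
   represented by a finite formal combination  sum c_k <X_k>; two combinations
   are equal in F(C) iff every isomorphism class gets the same coefficient. *)
Definition fsum := seq (int * Ob C).

Definition coef (L : fsum) (Y : Ob C) : int :=
  \sum_(p <- L) (if `[< isoob p.2 Y >] then p.1 else 0).

Definition Feq (L L' : fsum) : Prop := forall Y, coef L Y = coef L' Y.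

Definition fscale (k : int) (L : fsum) : fsum := [seq (k * p.1, p.2) | p <- L].

Definition in_span (G : fsum -> Prop) (L : fsum) : Prop :=
  exists gs : seq (int * fsum),
    Stdlib.Lists.List.Forall (fun g => G g.2) gs /\
    Feq L (flatten [seq fscale g.1 g.2 | g <- gs]).

Definition chi (s : nsigseq) : fsum := [seq ((-1) ^+ i, so s i) | i <- iota 0 n].

Definition Rgen (N : nsigseq -> Prop) (L : fsum) : Prop :=
  (exists s, N s /\ L = chi s) \/
  (~~ odd n /\ exists Z, is_zero Z /\ L = [:: (1, Z)]).

Definition ImGen (P : Ob C -> Prop) (L : fsum) : Prop :=
  exists A, P A /\ L = [:: (1, A)].

(* [X] = 0 in K0(C) / Im K0(A), i.e. <X> in R(C) + Im(F(A) -> F(C)) *)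
Definition class_zero_mod_image (N : nsigseq -> Prop) (P : Ob C -> Prop) (X : Ob C) : Prop :=
  exists L1 L2, [/\ in_span (Rgen N) L1, in_span (ImGen P) L2 &
                    Feq [:: (1, X)] (L1 ++ L2)].

End NAngulated.

From HB Require Import structures.
From mathcomp Require Import all_boot all_algebra.
From mathcomp Require Import boolp zify.
Set Implicit Arguments. Unset Strict Implicit. Unset Printing Implicit Defensive.
Import GRing.Theory.
Local Open Scope ring_scope.

(* Let [stab] be the abelian group of objects of C up to stable isomorphism relative to A:
   X ~ Y iff X ⊕ A1 ≅ Y ⊕ A2 for some A1, A2 in A; density of A provides inverses.
   The alternating sum of the classes of the terms of an n-angle vanishes in [stab]:
   adding rotations of trivial n-angles, whose alternating sums are 0, moves all terms
   but the last into A, and completeness then moves the last one into A as well.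
   Hence X ↦ [X] factors through K0(C)/Im K0(A). If its value on X is 0, then X ⊕ A
   lies in A for some A in A, and completeness applied to a sum of trivial n-angles
   puts X in A. *)

Section Biproducts.
Variable C : ncat.
Hypothesis HC : preadditive C.

Definition Hom (A B : Ob C) := {f : Mor C | hom f A B}.
HB.instance Definition _ A B := gen_eqMixin (Hom A B).
HB.instance Definition _ A B := gen_choiceMixin (Hom A B).

Lemma Hom_inj A B (f g : Hom A B) : sval f = sval g -> f = g.
Proof. case: f g => [f pf] [g pg] /= E; subst; congr exist; apply: Prop_irrelevance. Qed.

Definition hcomp A B D (g : Hom B D) (f : Hom A B) : Hom A D :=
  exist _ (comp (sval g) (sval f)) (pa_comp HC (svalP f) (svalP g)).
Definition hid A : Hom A A := exist _ (idm A) (pa_id HC A).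
Definition hzero A B : Hom A B := exist _ (zerom A B) (pa_zero HC A B).
Definition hadd A B (f g : Hom A B) : Hom A B :=
  exist _ (addm (sval f) (sval g)) (pa_add HC (svalP f) (svalP g)).
Definition hopp A B (f : Hom A B) : Hom A B := exist _ (oppm (sval f)) (pa_opp HC (svalP f)).

Lemma haddA A B : associative (@hadd A B).
Proof. by move=> f g h; apply: Hom_inj; rewrite /= (pa_addA HC (svalP f) (svalP g) (svalP h)). Qed.
Lemma haddC A B : commutative (@hadd A B).
Proof. by move=> f g; apply: Hom_inj; rewrite /= (pa_addC HC (svalP f) (svalP g)). Qed.
Lemma hadd0 A B : left_id (hzero A B) (@hadd A B).
Proof. by move=> f; rewrite haddC; apply: Hom_inj; rewrite /= (pa_add0 HC (svalP f)). Qed.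
Lemma haddN A B : left_inverse (hzero A B) (@hopp A B) (@hadd A B).
Proof. by move=> f; rewrite haddC; apply: Hom_inj; rewrite /= (pa_addN HC (svalP f)). Qed.

HB.instance Definition _ A B :=
  GRing.isZmodule.Build (Hom A B) (@haddA A B) (@haddC A B) (@hadd0 A B) (@haddN A B).

Local Notation "g ⊚ f" := (hcomp g f) (at level 40, left associativity).

Lemma hcompA A B D E (f : Hom A B) (g : Hom B D) (h : Hom D E) : h ⊚ (g ⊚ f) = h ⊚ g ⊚ f.
Proof. by apply: Hom_inj; rewrite /= (pa_assoc HC (svalP f) (svalP g) (svalP h)). Qed.
Lemma hcomp1l A B (f : Hom A B) : hid B ⊚ f = f.
Proof. by apply: Hom_inj; rewrite /= (pa_idl HC (svalP f)). Qed.
Lemma hcomp1r A B (f : Hom A B) : f ⊚ hid A = f.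
Proof. by apply: Hom_inj; rewrite /= (pa_idr HC (svalP f)). Qed.
Lemma hcompDr A B D (f g : Hom A B) (h : Hom B D) : h ⊚ (f + g) = h ⊚ f + h ⊚ g.
Proof. by apply: Hom_inj; rewrite /= (pa_compDl HC (svalP f) (svalP g) (svalP h)). Qed.
Lemma hcompDl A B D (f g : Hom B D) (h : Hom A B) : (f + g) ⊚ h = f ⊚ h + g ⊚ h.
Proof. by apply: Hom_inj; rewrite /= (pa_compDr HC (svalP f) (svalP g) (svalP h)). Qed.
Lemma hcomp0r A B D (h : Hom B D) : h ⊚ (0 : Hom A B) = 0.
Proof. by apply/(@addrI _ (h ⊚ 0)); rewrite -hcompDr !addr0. Qed.
Lemma hcomp0l A B D (h : Hom A B) : (0 : Hom B D) ⊚ h = 0.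
Proof. by apply/(@addrI _ (0 ⊚ h)); rewrite -hcompDl !addr0. Qed.

Lemma hcomp_cancel1 A B D (a : Hom A B) (b : Hom B A) (x : Hom A D) :
  b ⊚ a = hid A -> x ⊚ b ⊚ a = x.
Proof. by move=> e; rewrite -hcompA e hcomp1r. Qed.
Lemma hcomp_cancel0 A B A' D (a : Hom A B) (b : Hom B A') (x : Hom A' D) :
  b ⊚ a = 0 -> x ⊚ b ⊚ a = 0.
Proof. by move=> e; rewrite -hcompA e hcomp0r. Qed.

Ltac hnorm := rewrite ?hcompDl ?hcompDr ?hcompA ?hcomp0l ?hcomp0r ?hcomp1l ?hcomp1r
  ?addr0 ?add0r.
Ltac hcancel e := rewrite ?e ?(hcomp_cancel1 _ e) ?(hcomp_cancel0 _ e).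

Definition hiso A B (f : Hom A B) := exists g : Hom B A, g ⊚ f = hid A /\ f ⊚ g = hid B.

Lemma isoobP (X Y : Ob C) : isoob X Y <-> exists f : Hom X Y, hiso f.
Proof.
split=> [[f [hf [g [hg [e1 e2]]]]]|[[f hf] [[g hg] [e1 e2]]]].
  case: (hf) hg e1 e2 => -> -> hg e1 e2.
  by exists (exist _ f hf), (exist _ g hg); split; apply: Hom_inj.
have [df cf] := hf; exists f; split => //; exists g; rewrite df cf.
by split; [|split; [move/(congr1 sval): e1|move/(congr1 sval): e2]].
Qed.

Lemma isoob_refl (X : Ob C) : isoob X X.
Proof. by apply/isoobP; exists (hid X), (hid X); rewrite hcomp1l. Qed.
Lemma isoob_sym (X Y : Ob C) : isoob X Y -> isoob Y X.
Proof. by move/isoobP=> [f [g [e1 e2]]]; apply/isoobP; exists g, f. Qed.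
Lemma isoob_trans (X Y Z : Ob C) : isoob X Y -> isoob Y Z -> isoob X Z.
Proof.
move/isoobP=> [f [f' [f1 f2]]] /isoobP [g [g' [g1 g2]]]; apply/isoobP.
exists (g ⊚ f), (f' ⊚ g'); split.
  by rewrite !hcompA -(hcompA g g' f') g1 hcomp1r f1.
by rewrite !hcompA -(hcompA f' f g) f2 hcomp1r g2.
Qed.

Definition biprodH X Y O (i1 : Hom X O) (i2 : Hom Y O) (p1 : Hom O X) (p2 : Hom O Y) :=
  [/\ p1 ⊚ i1 = hid X, p2 ⊚ i2 = hid Y, p1 ⊚ i2 = 0, p2 ⊚ i1 = 0 &
      i1 ⊚ p1 + i2 ⊚ p2 = hid O].

Lemma is_biprodP (X Y : Ob C) d : is_biprod X Y d ->
  exists (i1 : Hom X (bo d)) (i2 : Hom Y (bo d)) (p1 : Hom (bo d) X) (p2 : Hom (bo d) Y),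
   [/\ sval i1 = bi1 d, sval i2 = bi2 d, sval p1 = bp1 d, sval p2 = bp2 d &
       biprodH i1 i2 p1 p2].
Proof.
case=> h1 h2 h3 h4 [e1 e2 e3 e4 e5].
exists (exist (fun f => hom f _ _) _ h1), (exist (fun f => hom f _ _) _ h2).
exists (exist (fun f => hom f _ _) _ h3), (exist (fun f => hom f _ _) _ h4).
by split => //; split; apply: Hom_inj.
Qed.

Lemma biprodH_isoob X Y O O' (i1 : Hom X O) (i2 : Hom Y O) p1 p2
  (j1 : Hom X O') (j2 : Hom Y O') q1 q2 :
  biprodH i1 i2 p1 p2 -> biprodH j1 j2 q1 q2 -> isoob O O'.
Proof.
case=> e1 e2 e3 e4 e5 [f1 f2 f3 f4 f5]; apply/isoobP.
exists (j1 ⊚ p1 + j2 ⊚ p2), (i1 ⊚ q1 + i2 ⊚ q2); split.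
  by hnorm; hcancel f1; hcancel f2; hcancel f3; hcancel f4; hnorm.
by hnorm; hcancel e1; hcancel e2; hcancel e3; hcancel e4; hnorm.
Qed.

Lemma biprodH_sym X Y O (i1 : Hom X O) (i2 : Hom Y O) p1 p2 :
  biprodH i1 i2 p1 p2 -> biprodH i2 i1 p2 p1.
Proof. by case=> e1 e2 e3 e4 e5; split => //; rewrite addrC. Qed.

Lemma biprodH_iso X X' Y Y' O (i1 : Hom X O) (i2 : Hom Y O) p1 p2
  (a : Hom X X') (a' : Hom X' X) (b : Hom Y Y') (b' : Hom Y' Y) :
  a' ⊚ a = hid X -> a ⊚ a' = hid X' -> b' ⊚ b = hid Y -> b ⊚ b' = hid Y' ->
  biprodH i1 i2 p1 p2 -> biprodH (i1 ⊚ a') (i2 ⊚ b') (a ⊚ p1) (b ⊚ p2).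
Proof.
move=> a1 a2 b1 b2 [e1 e2 e3 e4 e5].
split; hnorm; hcancel e1; hcancel e2; hcancel e3; hcancel e4; hnorm => //.
by hcancel a1; hcancel b1; hnorm.
Qed.

Lemma biprodH_zero X Z : hid Z = 0 -> biprodH (hid X) (0 : Hom Z X) (hid X) 0.
Proof. by move=> z; split; hnorm. Qed.

Lemma biprodH_assoc X Y W S O E (i1 : Hom X S) (i2 : Hom Y S) p1 p2
  (j1 : Hom S O) (j2 : Hom W O) q1 q2 (k1 : Hom Y E) (k2 : Hom W E) r1 r2 :
  biprodH i1 i2 p1 p2 -> biprodH j1 j2 q1 q2 -> biprodH k1 k2 r1 r2 ->
  biprodH (j1 ⊚ i1) (j1 ⊚ i2 ⊚ r1 + j2 ⊚ r2) (p1 ⊚ q1) (k1 ⊚ p2 ⊚ q1 + k2 ⊚ q2).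
Proof.
case=> e1 e2 e3 e4 e5 [f1 f2 f3 f4 f5] [g1 g2 g3 g4 g5]; split.
- by hnorm; hcancel f1; hcancel e1; hnorm.
- by hnorm; hcancel f1; hcancel f2; hcancel f3; hcancel f4; hcancel e2; hnorm.
- by hnorm; hcancel f1; hcancel f3; hcancel e3; hnorm.
- by hnorm; hcancel f1; hcancel f4; hcancel e4; hnorm.
rewrite -f5 -[j1 in RHS]hcomp1r -e5; hnorm.
by hcancel g1; hcancel g2; hcancel g3; hcancel g4; hnorm; rewrite !addrA.
Qed.

Lemma biprod_isoob (X X' Y Y' : Ob C) d d' :
  is_biprod X Y d -> isoob X X' -> isoob Y Y' -> is_biprod X' Y' d' ->
  isoob (bo d) (bo d').
Proof.
move=> /is_biprodP [i1 [i2 [p1 [p2 [_ _ _ _ b]]]]] /isoobP [a [a' [a1 a2]]].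
move=> /isoobP [c [c' [c1 c2]]] /is_biprodP [j1 [j2 [q1 [q2 [_ _ _ _ b']]]]].
exact: biprodH_isoob (biprodH_iso a1 a2 c1 c2 b) b'.
Qed.

Lemma biprod_comm (X Y : Ob C) d d' :
  is_biprod X Y d -> is_biprod Y X d' -> isoob (bo d) (bo d').
Proof.
move=> /is_biprodP [i1 [i2 [p1 [p2 [_ _ _ _ b]]]]].
move=> /is_biprodP [j1 [j2 [q1 [q2 [_ _ _ _ b']]]]].
exact: biprodH_isoob (biprodH_sym b) b'.
Qed.

Lemma biprod_zero (X Z : Ob C) d : is_zero Z -> is_biprod X Z d -> isoob (bo d) X.
Proof.
move=> z /is_biprodP [i1 [i2 [p1 [p2 [_ _ _ _ b]]]]].
by apply: biprodH_isoob b (biprodH_zero X _); apply: Hom_inj.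
Qed.

Lemma biprod_assoc (X Y W : Ob C) dXY d1 dYW d2 :
  is_biprod X Y dXY -> is_biprod (bo dXY) W d1 ->
  is_biprod Y W dYW -> is_biprod X (bo dYW) d2 -> isoob (bo d1) (bo d2).
Proof.
move=> /is_biprodP [i1 [i2 [p1 [p2 [_ _ _ _ b1]]]]].
move=> /is_biprodP [j1 [j2 [q1 [q2 [_ _ _ _ b2]]]]].
move=> /is_biprodP [k1 [k2 [r1 [r2 [_ _ _ _ b3]]]]].
move=> /is_biprodP [l1 [l2 [s1 [s2 [_ _ _ _ b4]]]]].
exact: biprodH_isoob (biprodH_assoc b1 b2 b3) b4.
Qed.

Hypothesis HS : sig_auto (fun _ : Ob C => True).

Lemma hom_sig f (A B : Ob C) : hom f A B -> hom (SigM f) (SigO A) (SigO B).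
Proof. by case: HS => h _ _ _ _; apply: h. Qed.

Definition hsig A B (f : Hom A B) : Hom (SigO A) (SigO B) :=
  exist _ (SigM (sval f)) (hom_sig (svalP f)).

Lemma hsig_comp A B D (f : Hom A B) (g : Hom B D) : hsig (g ⊚ f) = hsig g ⊚ hsig f.
Proof. by apply: Hom_inj; case: HS => _ _ h _ _; rewrite /= (h _ _ _ _ _ (svalP f) (svalP g)). Qed.
Lemma hsig1 A : hsig (hid A) = hid (SigO A).
Proof. by apply: Hom_inj; case: HS => _ h _ _ _; rewrite /= h. Qed.
Lemma hsigD A B (f g : Hom A B) : hsig (f + g) = hsig f + hsig g.
Proof. by apply: Hom_inj; case: HS => _ _ _ h _; rewrite /= (h _ _ _ _ (svalP f) (svalP g)). Qed.
Lemma hsig0 A B : hsig (0 : Hom A B) = 0.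
Proof. by apply/(@addrI _ (hsig 0)); rewrite -hsigD !addr0. Qed.

Definition sig_bip (d : bip C) : bip C :=
  Bip (SigO (bo d)) (SigM (bi1 d)) (SigM (bi2 d)) (SigM (bp1 d)) (SigM (bp2 d)).

Lemma is_biprod_sig X Y d : is_biprod X Y d -> is_biprod (SigO X) (SigO Y) (sig_bip d).
Proof.
rewrite /sig_bip.
move=> /is_biprodP [i1 [i2 [p1 [p2 [<- <- <- <- [e1 e2 e3 e4 e5]]]]]].
have [] : biprodH (hsig i1) (hsig i2) (hsig p1) (hsig p2).
  by split; rewrite -?hsig_comp -?hsigD ?e1 ?e2 ?e3 ?e4 ?e5 ?hsig1 ?hsig0.
move=> /(congr1 sval) f1 /(congr1 sval) f2 /(congr1 sval) f3 /(congr1 sval) f4 /(congr1 sval) f5.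
split; [exact: (svalP (hsig i1))|exact: (svalP (hsig i2))|exact: (svalP (hsig p1))
       |exact: (svalP (hsig p2))|].
by split; [exact: f1|exact: f2|exact: f3|exact: f4|exact f5].
Qed.

Definition biprod_map (d d' : bip C) (a b : Mor C) : Mor C :=
  addm (comp (comp (bi1 d') a) (bp1 d)) (comp (comp (bi2 d') b) (bp2 d)).

Lemma biprod_mapP X Y X' Y' d d' a b :
  is_biprod X Y d -> is_biprod X' Y' d' -> hom a X X' -> hom b Y Y' ->
  [/\ hom (biprod_map d d' a b) (bo d) (bo d'),
      comp (biprod_map d d' a b) (bi1 d) = comp (bi1 d') a,
      comp (biprod_map d d' a b) (bi2 d) = comp (bi2 d') b,
      comp a (bp1 d) = comp (bp1 d') (biprod_map d d' a b) &
      comp b (bp2 d) = comp (bp2 d') (biprod_map d d' a b)].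
Proof.
rewrite /biprod_map.
move=> /is_biprodP [i1 [i2 [p1 [p2 [<- <- <- <- [e1 e2 e3 e4 e5]]]]]].
move=> /is_biprodP [j1 [j2 [q1 [q2 [<- <- <- <- [f1 f2 f3 f4 f5]]]]]] ha hb.
pose A : Hom X X' := exist _ a ha; pose B : Hom Y Y' := exist _ b hb.
pose m := j1 ⊚ A ⊚ p1 + j2 ⊚ B ⊚ p2.
have g1 : m ⊚ i1 = j1 ⊚ A by rewrite /m; hnorm; hcancel e1; hcancel e4; hnorm.
have g2 : m ⊚ i2 = j2 ⊚ B by rewrite /m; hnorm; hcancel e2; hcancel e3; hnorm.
have g3 : q1 ⊚ m = A ⊚ p1 by rewrite /m; hnorm; hcancel f1; hcancel f3; hnorm.
have g4 : q2 ⊚ m = B ⊚ p2 by rewrite /m; hnorm; hcancel f2; hcancel f4; hnorm.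
split; first exact: (svalP m).
- exact: (congr1 sval g1).
- exact: (congr1 sval g2).
- exact: (esym (congr1 sval g3)).
- exact: (esym (congr1 sval g4)).
Qed.

Variable n : nat.

Definition nshift T (sig : T -> T) (f : nat -> T) (i : nat) : T :=
  if (i.+1 < n)%N then f i.+1 else sig (f 0%N).

Lemma nshift_lt T (sig : T -> T) f i : (i.+1 < n)%N -> nshift sig f i = f i.+1.
Proof. by rewrite /nshift => ->. Qed.

Lemma nshift_last T (sig : T -> T) f : (0 < n)%N -> nshift sig f n.-1 = sig (f 0%N).
Proof. by move=> n0; rewrite /nshift prednK ?ltnn. Qed.

Lemma lt_predn_cases i : (i < n)%N -> (i.+1 < n)%N \/ i = n.-1.
Proof. by move=> ni; case: (ltnP i.+1 n); [left|right; lia]. Qed.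

Lemma is_nseqP P (s : nsigseq C) : (0 < n)%N ->
  is_nseq n P s <->
  forall i, (i < n)%N -> P (so s i) /\ hom (sm s i) (so s i) (nshift SigO (so s) i).
Proof.
move=> n0; have nn : (n.-1 < n)%N by rewrite ltn_predL.
split=> [[hP hs hl] i ni|h].
  split; first exact: hP.
  by case: (lt_predn_cases ni) => [hi|->]; [rewrite nshift_lt //; apply: hs|rewrite nshift_last].
split=> [i /h []|i hi|] //.
  by have [_] := h i (ltnW hi); rewrite nshift_lt.
by have [_] := h n.-1 nn; rewrite nshift_last.
Qed.

Lemma seqmorP (s t : nsigseq C) phi : (0 < n)%N ->
  (forall i, (i < n)%N -> hom (phi i) (so s i) (so t i) /\
     comp (sm t i) (phi i) = comp (nshift SigM phi i) (sm s i)) ->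
  seqmor n s t phi.
Proof.
move=> n0 h; have nn : (n.-1 < n)%N by rewrite ltn_predL.
split=> [i /h []|i hi|] //.
  by have [_] := h i (ltnW hi); rewrite nshift_lt.
by have [_] := h n.-1 nn; rewrite nshift_last.
Qed.

Definition seq_biprod (s t : nsigseq C) (D : nat -> bip C) : nsigseq C :=
  NSeq (fun i => bo (D i))
       (fun i => biprod_map (D i) (nshift sig_bip D i) (sm s i) (sm t i)).

Lemma seq_biprodP (s t : nsigseq C) (D : nat -> bip C) : (0 < n)%N ->
  is_nseq n (fun _ => True) s -> is_nseq n (fun _ => True) t ->
  (forall i, (i < n)%N -> is_biprod (so s i) (so t i) (D i)) ->
  is_nseq n (fun _ => True) (seq_biprod s t D) /\ seqsum n s t (seq_biprod s t D).
Proof.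
move=> n0 /(is_nseqP _ _ n0) hs /(is_nseqP _ _ n0) ht hD.
have hD' i : (i < n)%N ->
    is_biprod (nshift SigO (so s) i) (nshift SigO (so t) i) (nshift sig_bip D i).
  move=> ni; case: (lt_predn_cases ni) => [hi|->].
    by rewrite !nshift_lt //; apply: hD.
  by rewrite !nshift_last //; apply/is_biprod_sig/hD.
have key i : (i < n)%N -> _ := fun ni =>
  biprod_mapP (hD i ni) (hD' i ni) (proj2 (hs i ni)) (proj2 (ht i ni)).
have bo_shift i : bo (nshift sig_bip D i) = nshift SigO (fun j => bo (D j)) i.
  by rewrite /nshift; case: ifP.
split.
  apply/is_nseqP => // i ni; split=> //.
  by case: (key i ni) => + _ _ _ _; rewrite bo_shift.
exists (fun i => bi1 (D i)), (fun i => bi2 (D i)), (fun i => bp1 (D i)), (fun i => bp2 (D i)).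
split; try (apply: seqmorP => // i ni; split; first by case: (hD i ni)).
- by have [_ -> _ _ _] := key i ni; rewrite /nshift; case: ifP.
- by have [_ _ -> _ _] := key i ni; rewrite /nshift; case: ifP.
- by have [_ _ _ -> _] := key i ni; rewrite /= /nshift; case: ifP.
- by have [_ _ _ _ ->] := key i ni; rewrite /= /nshift; case: ifP.
- by move=> i ni; case: (hD i ni).
Qed.

End Biproducts.

Section Valuation.
Variables (C : ncat) (V : zmodType) (g : Ob C -> V).
Hypothesis HC : preadditive C.
Hypothesis g_isoob : forall X Y, isoob X Y -> g X = g Y.

Definition fval (L : fsum C) : V := \sum_(p <- L) g p.2 *~ p.1.

Lemma fval_cat (L L' : fsum C) : fval (L ++ L') = fval L + fval L'.
Proof. by rewrite /fval big_cat. Qed.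

Lemma fval_scale k (L : fsum C) : fval (fscale k L) = fval L *~ k.
Proof. by rewrite /fval big_map mulrz_suml; apply: eq_bigr => p _; rewrite mulrC mulrzA. Qed.

Lemma coef_cat (L L' : fsum C) Y : coef (L ++ L') Y = coef L Y + coef L' Y.
Proof. by rewrite /coef big_cat. Qed.

Lemma coef_scale k (L : fsum C) Y : coef (fscale k L) Y = k * coef L Y.
Proof. by rewrite /coef big_map mulr_sumr; apply: eq_bigr => p _; case: ifP; rewrite ?mulr0. Qed.

Definition drop_class (X : Ob C) (L : fsum C) : fsum C :=
  [seq p <- L | ~~ `[< isoob p.2 X >]].

Lemma fval_drop_class X L : fval L = g X *~ coef L X + fval (drop_class X L).
Proof.
rewrite /fval /coef (bigID (fun p => `[< isoob p.2 X >])) big_filter -big_mkcond /=.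
by rewrite mulrz_sumr; congr (_ + _); apply: eq_bigr => p /asboolP /g_isoob ->.
Qed.

Lemma coef_drop_class X Y L :
  coef (drop_class X L) Y = if `[< isoob X Y >] then 0 else coef L Y.
Proof.
rewrite /coef big_filter [in RHS](bigID (fun p => `[< isoob p.2 X >])) /=.
case: (asboolP (isoob X Y)) => hXY.
  apply: big1 => p /asboolPn hpX; case: asboolP => // hpY.
  by exfalso; apply: hpX; exact: (isoob_trans HC hpY (isoob_sym HC hXY)).
rewrite [X in _ = X + _]big1 ?add0r // => p /asboolP hpX; case: asboolP => // hpY.
by exfalso; apply: hXY; exact: (isoob_trans HC (isoob_sym HC hpX) hpY).
Qed.

Lemma fval_eq0 (L : fsum C) : (forall Y, coef L Y = 0) -> fval L = 0.
Proof.
elim: {L}(size L).+1 {-2}L (ltnSn (size L)) => // m IH [|[c X] L] hs hL.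
  by rewrite /fval big_nil.
rewrite (fval_drop_class X) hL mulr0z add0r; apply: IH => [|Y].
  rewrite /drop_class /= asboolT ?size_filter; last exact: isoob_refl.
  exact: leq_ltn_trans (count_size _ _) _.
by rewrite (coef_drop_class X Y) hL; case: ifP.
Qed.

Lemma Feq_fval (L L' : fsum C) : Feq L L' -> fval L = fval L'.
Proof.
move=> h; apply/eqP; rewrite -subr_eq0 -mulrN1z -fval_scale -fval_cat.
by apply/eqP/fval_eq0 => Y; rewrite coef_cat coef_scale h mulN1r addrN.
Qed.

Lemma fval_span (G : fsum C -> Prop) L :
  (forall L, G L -> fval L = 0) -> in_span G L -> fval L = 0.
Proof.
move=> hG [gs [hgs /Feq_fval ->]]; elim: gs hgs => [|[k L1] gs IH] hgs.
  by rewrite /fval big_nil.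
by inversion hgs; rewrite /= fval_cat fval_scale hG // mul0rz add0r IH.
Qed.

End Valuation.

Section StableClasses.
Variable C : ncat.
Hypothesis HC : preadditive C.
Variable bp : Ob C -> Ob C -> bip C.
Hypothesis bpP : forall X Y, is_biprod X Y (bp X Y).
Variable P : Ob C -> Prop.
Hypothesis P_isoob : forall X Y, P X -> isoob X Y -> P Y.
Variable Z0 : Ob C.
Hypothesis P_Z0 : P Z0.
Hypothesis Z0_zero : is_zero Z0.
Hypothesis P_biprod : forall X Y, P X -> P Y -> exists d, P (bo d) /\ is_biprod X Y d.
Hypothesis P_dense : dense P.

Local Notation "X ⊕ Y" := (bo (bp X Y)) (at level 50, left associativity).
Local Notation isoob_trans := (isoob_trans HC).
Local Notation isoob_sym := (isoob_sym HC).
Local Notation isoob_refl := (isoob_refl HC _).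

Lemma biprod_isoob_sum X Y d : is_biprod X Y d -> isoob (bo d) (X ⊕ Y).
Proof. by move=> h; exact: (biprod_isoob HC h isoob_refl isoob_refl (bpP X Y)). Qed.
Lemma sum_isoob X X' Y Y' : isoob X X' -> isoob Y Y' -> isoob (X ⊕ Y) (X' ⊕ Y').
Proof. by move=> hX hY; exact: (biprod_isoob HC (bpP X Y) hX hY (bpP X' Y')). Qed.
Lemma sum_comm X Y : isoob (X ⊕ Y) (Y ⊕ X).
Proof. exact: (biprod_comm HC (bpP X Y) (bpP Y X)). Qed.
Lemma sum_assoc X Y W : isoob (X ⊕ Y ⊕ W) (X ⊕ (Y ⊕ W)).
Proof. exact: (biprod_assoc HC (bpP X Y) (bpP _ W) (bpP Y W) (bpP X _)). Qed.
Lemma sum_zero X Z : is_zero Z -> isoob (X ⊕ Z) X.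
Proof. by move=> z; exact: (biprod_zero HC z (bpP X Z)). Qed.

Lemma P_sum X Y : P X -> P Y -> P (X ⊕ Y).
Proof.
by move=> hX hY; case: (P_biprod hX hY) => d [hd bd]; exact: P_isoob hd (biprod_isoob_sum bd).
Qed.
Lemma P_complement X : exists Y, P (X ⊕ Y).
Proof.
by case: (P_dense X) => Y [d [bd hd]]; exists Y; exact: P_isoob hd (biprod_isoob_sum bd).
Qed.

Lemma sum_interchange X Y A B : isoob (X ⊕ Y ⊕ (A ⊕ B)) (X ⊕ A ⊕ (Y ⊕ B)).
Proof.
apply: (isoob_trans (sum_assoc _ _ _)).
apply: (isoob_trans (sum_isoob isoob_refl (isoob_sym (sum_assoc _ _ _)))).
apply: (isoob_trans (sum_isoob isoob_refl (sum_isoob (sum_comm _ _) isoob_refl))).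
apply: (isoob_trans (sum_isoob isoob_refl (sum_assoc _ _ _))).
exact: isoob_sym (sum_assoc _ _ _).
Qed.

Definition stably_isoob X Y := exists A1 A2, [/\ P A1, P A2 & isoob (X ⊕ A1) (Y ⊕ A2)].

Lemma stably_isoob_refl X : stably_isoob X X.
Proof. by exists Z0, Z0; split => //; exact: isoob_refl. Qed.
Lemma stably_isoob_sym X Y : stably_isoob X Y -> stably_isoob Y X.
Proof. by case=> A1 [A2 [h1 h2 h]]; exists A2, A1; split => //; exact: isoob_sym. Qed.
Lemma stably_isoob_trans X Y W : stably_isoob X Y -> stably_isoob Y W -> stably_isoob X W.
Proof.
case=> A1 [A2 [a1 a2 h1]] [A3 [A4 [a3 a4 h2]]].
exists (A1 ⊕ A3), (A4 ⊕ A2); split; try exact: P_sum.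
apply: (isoob_trans (isoob_sym (sum_assoc _ _ _))).
apply: (isoob_trans (sum_isoob h1 isoob_refl)).
apply: (isoob_trans (sum_assoc _ _ _)).
apply: (isoob_trans (sum_isoob isoob_refl (sum_comm _ _))).
apply: (isoob_trans (isoob_sym (sum_assoc _ _ _))).
apply: (isoob_trans (sum_isoob h2 isoob_refl)).
exact: sum_assoc.
Qed.
Lemma stably_isoob_sum X X' Y Y' :
  stably_isoob X X' -> stably_isoob Y Y' -> stably_isoob (X ⊕ Y) (X' ⊕ Y').
Proof.
case=> A1 [A2 [a1 a2 h1]] [B1 [B2 [b1 b2 h2]]].
exists (A1 ⊕ B1), (A2 ⊕ B2); split; try exact: P_sum.
apply: (isoob_trans (sum_interchange _ _ _ _)).
exact: isoob_trans (sum_isoob h1 h2) (isoob_sym (sum_interchange _ _ _ _)).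
Qed.
Lemma isoob_stably X Y : isoob X Y -> stably_isoob X Y.
Proof. by move=> h; exists Z0, Z0; split => //; exact: sum_isoob h isoob_refl. Qed.
Lemma stably_isoob_P X : P X -> stably_isoob X Z0.
Proof. by move=> h; exists Z0, X; split => //; exact: sum_comm. Qed.

Definition stab := {S : Ob C -> Prop | exists X, S = stably_isoob X}.
HB.instance Definition _ := gen_eqMixin stab.
HB.instance Definition _ := gen_choiceMixin stab.

Lemma stab_inj (a b : stab) : sval a = sval b -> a = b.
Proof. case: a b => [a pa] [b pb] /= E; subst; congr exist; apply: Prop_irrelevance. Qed.

Definition stab_cl X : stab := exist _ (stably_isoob X) (ex_intro _ X erefl).

Lemma stab_cl_eq X Y : stab_cl X = stab_cl Y <-> stably_isoob X Y.
Proof.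
split=> [/(congr1 sval) /= e|h].
  by apply: stably_isoob_sym; rewrite -e; exact: stably_isoob_refl.
apply: stab_inj => /=; apply: funext => W; apply: propext.
by split; apply: stably_isoob_trans; [exact: stably_isoob_sym|].
Qed.

Definition stab_repr (a : stab) : Ob C := projT1 (cid (svalP a)).
Lemma stab_reprK a : stab_cl (stab_repr a) = a.
Proof. by apply: stab_inj; rewrite /= /stab_repr; case: (cid (svalP a)) => X /= ->. Qed.
Lemma stab_clP a : exists X, a = stab_cl X.
Proof. by exists (stab_repr a); rewrite stab_reprK. Qed.
Lemma stab_repr_cl X : stably_isoob (stab_repr (stab_cl X)) X.
Proof. by apply/stab_cl_eq; rewrite stab_reprK. Qed.

Definition complement X := projT1 (cid (P_complement X)).
Lemma complementP X : P (X ⊕ complement X).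
Proof. exact: (projT2 (cid (P_complement X))). Qed.

Definition stab_add a b := stab_cl (stab_repr a ⊕ stab_repr b).
Definition stab_opp a := stab_cl (complement (stab_repr a)).

Lemma stab_add_cl X Y : stab_add (stab_cl X) (stab_cl Y) = stab_cl (X ⊕ Y).
Proof. by apply/stab_cl_eq; apply: stably_isoob_sum; apply: stab_repr_cl. Qed.

Lemma stab_addA : associative stab_add.
Proof.
move=> a b c; case: (stab_clP a) (stab_clP b) (stab_clP c) => [X ->] [Y ->] [W ->].
by rewrite !stab_add_cl; apply/stab_cl_eq/isoob_stably; exact: isoob_sym (sum_assoc _ _ _).
Qed.
Lemma stab_addC : commutative stab_add.
Proof.
move=> a b; case: (stab_clP a) (stab_clP b) => [X ->] [Y ->].
by rewrite !stab_add_cl; apply/stab_cl_eq/isoob_stably; exact: sum_comm.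
Qed.
Lemma stab_add0 : left_id (stab_cl Z0) stab_add.
Proof.
move=> a; case: (stab_clP a) => X ->; rewrite stab_add_cl; apply/stab_cl_eq/isoob_stably.
exact: isoob_trans (sum_comm _ _) (sum_zero X Z0_zero).
Qed.
Lemma stab_addN : left_inverse (stab_cl Z0) stab_opp stab_add.
Proof.
move=> a; case: (stab_clP a) => X ->; rewrite /stab_opp stab_add_cl; apply/stab_cl_eq.
have hX := stably_isoob_sym (stab_repr_cl X).
apply: (stably_isoob_trans (stably_isoob_sum (stably_isoob_refl _) hX)).
apply: (stably_isoob_trans (isoob_stably (sum_comm _ _))).
exact: stably_isoob_P (complementP _).
Qed.

HB.instance Definition _ := GRing.isZmodule.Build stab stab_addA stab_addC stab_add0 stab_addN.

Lemma stab_cl_isoob X Y : isoob X Y -> stab_cl X = stab_cl Y.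
Proof. by move=> h; apply/stab_cl_eq/isoob_stably. Qed.
Lemma stab_cl_biprod X Y d : is_biprod X Y d -> stab_cl (bo d) = stab_cl X + stab_cl Y.
Proof. by move=> h; rewrite [_ + _]stab_add_cl; apply/stab_cl_isoob/biprod_isoob_sum. Qed.
Lemma stab_cl_P X : P X -> stab_cl X = 0.
Proof. by move=> h; apply/stab_cl_eq/stably_isoob_P. Qed.
Lemma stab_cl_eq0_sum X : stab_cl X = 0 -> exists A, P A /\ P (X ⊕ A).
Proof.
move/stab_cl_eq => [A1 [A2 [a1 a2 h]]]; exists A1; split => //.
exact: P_isoob (P_sum P_Z0 a2) (isoob_sym h).
Qed.

Hypothesis HS : sig_auto (fun _ : Ob C => True).
Variable n : nat.
Hypothesis n_ge3 : (2 < n)%N.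
Variable N : nsigseq C -> Prop.
Hypothesis HN : nangulated n (fun _ => True) N.
Hypothesis P_sig : forall X, P X -> P (SigO X).
Hypothesis P_complete : complete n N P.

Lemma sig_surj (Y : Ob C) : exists X, SigO X = Y.
Proof. by case: HS => _ _ _ _ [_ _ hsurj _ _]; case: (hsurj Y I) => X [_ <-]; exists X. Qed.

Lemma so_iter_lrot k (s : nsigseq C) i : (k <= n)%N -> (i < n)%N ->
  so (iter k (lrot n) s) i =
    if (i + k < n)%N then so s (i + k) else SigO (so s (i + k - n)).
Proof.
elim: k i => [|k IH] i kn ni; first by rewrite addn0 ni.
rewrite iterS /=; case: ifP => h; rewrite IH; try lia.
  by rewrite addSnnS.
have -> : (0 + k < n)%N by lia.
have -> : (i + k.+1 < n)%N = false by lia.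
by have -> : (i + k.+1 - n = 0 + k)%N by lia.
Qed.

Lemma iter_lrot_nangle k (s : nsigseq C) : N s -> N (iter k (lrot n) s).
Proof.
elim: k => // k IH /IH hs; rewrite iterS.
exact/(na_rot HN (na_wf HN hs)).
Qed.

Definition triv_at m (A : Ob C) := iter (n - m) (lrot n) (triv n A Z0).

Lemma triv_at_nangle m A : N (triv_at m A).
Proof. exact/iter_lrot_nangle/(na_triv HN). Qed.

Lemma so_triv_at m A i : (m.+2 <= n)%N -> (i < n)%N ->
  so (triv_at m A) i = if (i < m)%N then Z0 else SigO (if (i - m < 2)%N then A else Z0).
Proof.
move=> mn ni; rewrite /triv_at so_iter_lrot /triv /=; try lia.
case: ifP => h.
  have -> : (i < m)%N by lia.
  by have -> : (i + (n - m) < 2)%N = false by lia.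
have -> : (i < m)%N = false by lia.
by have -> : (i + (n - m) - n = i - m)%N by lia.
Qed.

Definition euler (s : nsigseq C) : stab :=
  \sum_(i <- iota 0 n) stab_cl (so s i) *~ (-1) ^+ i.

Lemma euler_P (s : nsigseq C) : (forall i, (i < n)%N -> P (so s i)) -> euler s = 0.
Proof.
move=> h; rewrite /euler big1_seq // => i; rewrite mem_iota add0n => /andP [_ hi].
by rewrite stab_cl_P ?mul0rz //; apply: h.
Qed.

Lemma euler_triv_at m A : (m.+2 <= n)%N -> euler (triv_at m A) = 0.
Proof.
move=> mn; rewrite /euler.
have -> : iota 0 n = iota 0 m ++ [:: m; m.+1] ++ iota m.+2 (n - m.+2).
  have -> : iota 0 n = iota 0 (m + 2 + (n - m.+2)) by congr iota; lia.
  by rewrite !iotaD add0n -catA addn2.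
rewrite !big_cat /= !big_cons big_nil big1_seq => [|i]; last first.
  rewrite mem_iota => hi; rewrite so_triv_at; try lia.
  have -> : (i < m)%N by lia.
  by rewrite stab_cl_P ?mul0rz.
rewrite big1_seq => [|i]; last first.
  rewrite mem_iota => hi; rewrite so_triv_at; try lia.
  have -> : (i < m)%N = false by lia.
  have -> : (i - m < 2)%N = false by lia.
  by rewrite stab_cl_P ?mul0rz //; apply: P_sig.
rewrite !so_triv_at ?ltnn ?subnn ?subSnn ?ltnNge ?leqnSn //=; try lia.
by rewrite add0r !addr0 exprS mulN1r mulrNz addrN.
Qed.

Definition angle_sum (s t : nsigseq C) := seq_biprod n s t (fun i => bp (so s i) (so t i)).

Lemma angle_sum_nangle s t : N s -> N t -> N (angle_sum s t).
Proof.
move=> hs ht; have n0 : (0 < n)%N by lia.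
have [hw hsum] :=
  seq_biprodP HC HS n0 (na_wf HN hs) (na_wf HN ht) (fun i _ => bpP (so s i) (so t i)).
exact: (proj2 (na_sum HN (na_wf HN hs) (na_wf HN ht) hw hsum)).
Qed.

Lemma euler_angle_sum s t : euler (angle_sum s t) = euler s + euler t.
Proof.
rewrite /euler -big_split; apply: eq_bigr => i _ /=.
by rewrite (stab_cl_biprod (bpP _ _)) mulrzDl.
Qed.

(* Adding a rotated trivial n-angle on a desuspended complement of the m-th term moves
   that term into P without changing the Euler characteristic. *)
Lemma nangle_absorb s m : N s -> (m <= n.-1)%N ->
  exists u, [/\ N u, euler u = euler s & forall i, (i < m)%N -> P (so u i)].
Proof.
move=> hs; elim: m => [|m IH] mn; first by exists s.
have [u [hu eu Pu]] := IH (ltnW mn).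
have [A eA] := sig_surj (complement (so u m)).
exists (angle_sum u (triv_at m A)); split.
- exact: angle_sum_nangle hu (triv_at_nangle m A).
- by rewrite euler_angle_sum euler_triv_at ?eu ?addr0 //; lia.
move=> i im /=; rewrite so_triv_at; try lia.
case: (ltngtP i m) => him; [by apply: P_sum => //; apply: Pu|lia|].
by rewrite him subnn /= eA; exact: complementP.
Qed.

Lemma euler_nangle s : N s -> euler s = 0.
Proof.
move=> hs; have [u [hu <- Pu]] := nangle_absorb hs (leqnn n.-1).
apply: euler_P => i ni; case: (ltnP i n.-1) => hi; first exact: Pu.
have -> : i = n.-1 by lia.
by apply: (P_complete hu) => [|j jn jne]; [lia|apply: Pu; lia].
Qed.

(* If X ⊕ A lies in P, the sum of the trivial n-angle on X with the trivial n-angle on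
   Σ^-1 A rotated to positions 1, 2 has all terms but X ⊕ 0 in P. *)
Lemma stab_cl_eq0_P X : stab_cl X = 0 -> P X.
Proof.
case/stab_cl_eq0_sum => A [PA PXA]; have [B eB] := sig_surj A.
have hs := angle_sum_nangle (na_triv HN (A := X) I I Z0_zero) (triv_at_nangle 1 B).
have : P (so (angle_sum (triv n X Z0) (triv_at 1 B)) 0).
  apply: (P_complete hs); first lia.
  move=> [|[|[|i]]] ni // _; rewrite /= so_triv_at //=; try lia.
  - by rewrite eB.
  - by rewrite eB; apply: P_sum.
  - by apply: P_sum => //; apply: P_sig.
rewrite /= so_triv_at //=; try lia.
by move/P_isoob; apply; exact: sum_zero.
Qed.

Hypothesis n_odd : odd n.

Lemma class_zero_mod_image_P X : class_zero_mod_image n N P X -> P X.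
Proof.
case=> L1 [L2 [hL1 hL2 /(Feq_fval HC stab_cl_isoob)]].
have R0 : fval stab_cl L1 = 0.
  apply: (fval_span HC stab_cl_isoob _ hL1) => L [[s [hs ->]]|[]]; last by rewrite n_odd.
  by rewrite /fval /chi big_map; exact: euler_nangle.
have Im0 : fval stab_cl L2 = 0.
  apply: (fval_span HC stab_cl_isoob _ hL2) => L [A [PA ->]].
  by rewrite /fval big_cons big_nil /= addr0 stab_cl_P.
rewrite fval_cat R0 Im0 addr0 /fval big_cons big_nil /= addr0.
exact: stab_cl_eq0_P.
Qed.

End StableClasses.

Lemma P_class_zero_mod_image (C : ncat) n (N : nsigseq C -> Prop) (P : Ob C -> Prop) X :
  P X -> class_zero_mod_image n N P X.
Proof.
move=> PX; exists [::], [:: (1, X)]; split => [||Y] //.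
  by exists [::]; split; [constructor|].
exists [:: (1, [:: (1, X)])]; split; first by constructor; [exists X|constructor].
by move=> Y; rewrite /Feq /coef /= !big_cons !big_nil.
Qed.

Theorem lemma4p4 (n : nat) (C : ncat) (N : nsigseq C -> Prop)
    (inA : Ob C -> Prop) (NA : nsigseq C -> Prop) :
  (3 <= n)%N -> odd n ->
  nangulated n (fun _ => True) N ->
  nang_subcat n N inA NA ->
  dense inA ->
  complete n N inA ->
  forall X : Ob C, inA X <-> class_zero_mod_image n N inA X.
Proof.
move=> n_ge3 n_odd HN [A_isoob HA _] A_dense A_complete X.
have [HC _ C_biprod] := na_add HN.
have [_ [Z0 [A_Z0 Z0_zero]] A_biprod] := na_add HA.
have [_ _ _ _ [A_sig _ _ _ _]] := na_sig HA.
have bp_ex (Y W : Ob C) : exists d, is_biprod Y W d.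
  by case: (C_biprod Y W I I) => d [_ hd]; exists d.
pose bp Y W := projT1 (cid (bp_ex Y W)).
have bpP Y W : is_biprod Y W (bp Y W) := projT2 (cid (bp_ex Y W)).
split; first exact: P_class_zero_mod_image.
exact: (class_zero_mod_image_P HC bpP A_isoob A_Z0 Z0_zero A_biprod A_dense
          (na_sig HN) n_ge3 HN A_sig A_complete n_odd).
Qed.
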